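(* Let $d\ge1$ and suppose a set of $d$ elements (a gap) is partitioned into $\ell$ nonempty intervals $I_1,\dots,I_\ell$, consecutive by rank, and that for some $0\le p\le \ell$ the intervals $I_1,\dots,I_p$ are designated left-side and $I_{p+1},\dots,I_\ell$ right-side. Suppose the following balance condition holds: for every left-side interval $I_j$ with $j<p$, the number of elements in $I_1\cup\dots\cup I_{j-1}$ is strictly less than $|I_j|+|I_{j+1}|$; and symmetrically, for every right-side interval $I_j$ with $j>p+1$, the number of elements in $I_{j+1}\cup\dots\cup I_\ell$ is strictly less than $|I_j|+|I_{j-1}|$. Then $\ell\le 4\log(d)$.
   Context: $\log(x):=\max(\log_2 x,1)$, with $\log_2$ the binary logarithm. The balance condition is the negation of the merging rule: a left-side interval that is not the rightmost left-side interval is merged into its right neighbour when the number of elements left of it in the gap is at least the sum of its size and its right neighbour's size (and symmetrically on the right side). *)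

From Stdlib Require Import Reals.
From mathcomp Require Import all_boot.

Definition log2 (x : R) : R := Rdiv (ln x) (ln 2).
(* log(x) := max(log2 x, 1) as in the paper *)
Definition logm (x : R) : R := Rmax (log2 x) 1.

From Stdlib Require Import Reals Lra.
From mathcomp Require Import all_boot zify.

(* Write a_m = s_1 + ... + s_m for the prefix sums.  The balance
   condition on the left side says a_(j-1) < s_j + s_(j+1), i.e.
   a_(j+1) > 2 a_(j-1): prefix sums more than double every two steps, whence
   2^m <= (a_m + 1)^2 (lemma [prefix_sum_growth]).  The right side is the
   mirror image: reversing the order of the intervals turns suffix sums into
   prefix sums ([sum_reflect], [suffix_sum_growth]).  With L and R the total
   sizes of the left and right sides (L + R = d) this gives
   2^l = 2^p 2^(l-p) <= ((L+1)(R+1))^2 <= max(d,2)^4 ([pow2_le_max4]), and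
   taking binary logarithms, l <= 4 log2 max(d,2) <= 4 log(d)
   ([le_log2_of_pow2_le], [log2_max2_le_logm]). *)

Lemma prefix_sum_step (s : nat -> nat) (m : nat) :
  (\sum_(1 <= i < m.+3) s i = \sum_(1 <= i < m.+1) s i + s m.+1 + s m.+2)%N.
Proof. by rewrite big_nat_recr // big_nat_recr. Qed.

(* If the sizes s_1..s_n are positive and a_(j-1) < s_j + s_(j+1) for
   1 <= j < n, then 2^n <= (a_n + 1)^2: a_n grows at least like 2^(n/2).
   Two-step induction, using a_(m+2) > 2 a_m. *)
Lemma prefix_sum_growth (s : nat -> nat) (n : nat) :
  (forall j, (1 <= j <= n)%N -> (0 < s j)%N) ->
  (forall j, (1 <= j < n)%N -> (\sum_(1 <= i < j) s i < s j + s j.+1)%N) ->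
  (2 ^ n <= (\sum_(1 <= i < n.+1) s i).+1 ^ 2)%N.
Proof.
elim/ltn_ind: n => -[|[|m]] IH hpos hbal.
- by rewrite big_geq.
- by rewrite big_nat1; have := hpos 1%N isT; nia.
- have grow_m : (2 ^ m <= (\sum_(1 <= i < m.+1) s i).+1 ^ 2)%N.
    apply: IH => [|j hj|j hj]; [lia | apply: hpos | apply: hbal]; lia.
  have doubling := hbal m.+1 ltac:(lia).
  rewrite prefix_sum_step !expnS.
  nia.
Qed.

Lemma sum_reflect (s : nat -> nat) (l j : nat) : (j <= l.+1)%N ->
  (\sum_(1 <= i < j) s (l.+1 - i) = \sum_(l.+2 - j <= i < l.+1) s i)%N.
Proof.
elim: j => [|j IH] hj; first by rewrite !big_geq //; lia.
case: j IH hj => [|j] IH hj; first by rewrite !big_geq //; lia.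
rewrite big_nat_recr // IH; last lia.
rewrite [in RHS]big_ltn; last lia.
rewrite (_ : l.+2 - j.+2 = l.+1 - j.+1)%N; last lia.
rewrite (_ : (l.+1 - j.+1).+1 = l.+2 - j.+1)%N; last lia.
by rewrite addnC.
Qed.

Lemma suffix_sum_growth (s : nat -> nat) (l p : nat) :
  (p <= l)%N ->
  (forall j, (1 <= j <= l)%N -> (0 < s j)%N) ->
  (forall j, (p.+1 < j <= l)%N ->
     (\sum_(j.+1 <= i < l.+1) s i < s j + s j.-1)%N) ->
  (2 ^ (l - p) <= (\sum_(p.+1 <= i < l.+1) s i).+1 ^ 2)%N.
Proof.
move=> hpl hpos hbal.
rewrite (_ : p.+1 = l.+2 - (l - p).+1)%N; last lia.
rewrite -sum_reflect; last lia.
apply: prefix_sum_growth => [j hj | j hj]; first by apply: hpos; lia.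
rewrite sum_reflect; last lia.
have := hbal (l.+1 - j)%N ltac:(lia).
rewrite (_ : (l.+1 - j).+1 = l.+2 - j)%N; last lia.
by rewrite (_ : (l.+1 - j).-1 = l.+1 - j.+1)%N; last lia.
Qed.

(* Combining both sides: if 2^p <= (L+1)^2 and 2^r <= (R+1)^2 then
   2^(p+r) <= max(L+R,2)^4, because (L+1)(R+1) <= max(L+R,2)^2. *)
Lemma pow2_le_max4 {p r L R : nat} :
  (2 ^ p <= L.+1 ^ 2)%N -> (2 ^ r <= R.+1 ^ 2)%N ->
  (2 ^ (p + r) <= maxn (L + R) 2 ^ 4)%N.
Proof.
move=> hp hr.
have prod_le : (L.+1 * R.+1 <= maxn (L + R) 2 ^ 2)%N.
  by case: (leqP (L + R) 2) => hLR; nia.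
rewrite expnD; apply: leq_trans (leq_mul hp hr) _.
by rewrite -expnMn (_ : 4 = 2 * 2)%N // expnM leq_exp2r.
Qed.

Open Scope R_scope.

Lemma INR_expn (m n : nat) : INR (m ^ n)%N = INR m ^ n.
Proof. by elim: n => [|n IH] //=; rewrite expnS -multE mult_INR IH. Qed.

Lemma le_log2_of_pow2_le {l k K : nat} :
  (0 < K)%N -> (2 ^ l <= K ^ k)%N -> INR l <= INR k * log2 (INR K).
Proof.
move=> hK hpow.
have ln2_pos : 0 < ln 2 by rewrite -ln_1; apply: ln_increasing; lra.
have K_pos : 0 < INR K by apply: lt_0_INR; apply/ltP.
have real_pow : 2 ^ l <= INR K ^ k.
  by rewrite -(INR_expn 2) -INR_expn; apply: le_INR; apply/leP.
have ln_pow_le : INR l * ln 2 <= INR k * ln (INR K).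
  rewrite -!ln_pow //; last lra.
  have pow_pos : 0 < 2 ^ l by apply: pow_lt; lra.
  by case: real_pow => [lt|->]; [left; apply: ln_increasing | right].
rewrite /log2; apply: (Rmult_le_reg_r (ln 2)) => //.
by rewrite Rmult_assoc /Rdiv Rmult_assoc Rinv_l ?Rmult_1_r; lra.
Qed.

Lemma log2_max2_le_logm (d : nat) : log2 (INR (maxn d 2)) <= logm (INR d).
Proof.
rewrite /logm; case: (leqP d 2) => hd.
- rewrite /log2 (_ : INR 2 = 2) // /Rdiv Rinv_r; first exact: Rmax_r.
  by apply: Rgt_not_eq; rewrite -ln_1; apply: ln_increasing; lra.
- exact: Rmax_l.
Qed.

Close Scope R_scope.

Theorem lemma6p2 (d l p : nat) (s : nat -> nat) :
  (1 <= d)%N ->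
  (p <= l)%N ->
  (forall j, (1 <= j <= l)%N -> (0 < s j)%N) ->
  (\sum_(1 <= i < l.+1) s i)%N = d ->
  (forall j, (1 <= j < p)%N ->
     (\sum_(1 <= i < j) s i < s j + s j.+1)%N) ->
  (forall j, (p.+1 < j <= l)%N ->
     (\sum_(j.+1 <= i < l.+1) s i < s j + s j.-1)%N) ->
  Rle (INR l) (Rmult (INR 4) (logm (INR d))).
Proof.
move=> _ hpl hpos hsum hL hR.
set L := (\sum_(1 <= i < p.+1) s i)%N.
set R := (\sum_(p.+1 <= i < l.+1) s i)%N.
have split_d : d = (L + R)%N by rewrite -hsum /L /R -big_cat_nat.
have left_growth : (2 ^ p <= L.+1 ^ 2)%N.
  apply: prefix_sum_growth => // j hj; apply: hpos; lia.
have right_growth : (2 ^ (l - p) <= R.+1 ^ 2)%N by apply: suffix_sum_growth.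
have := pow2_le_max4 left_growth right_growth.
rewrite subnKC // -split_d => hpow.
have max_pos : (0 < maxn d 2)%N by rewrite leq_max orbT.
apply: Rle_trans (le_log2_of_pow2_le max_pos hpow) _.
by apply: Rmult_le_compat_l; [apply: pos_INR | apply: log2_max2_le_logm].
Qed.
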